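(* Let $f:D'^X\to\mathbb{R}$ be a function and let $(G,c)$ be a $k$-submodular $(X,k)$-network that represents $f$. Then an assignment $\phi:X\to D'$ is an extreme minimum solution of $f$ if and only if its corresponding cut $S_\phi$ is an extreme minimum cut.
   Context: $D=\{1,\dots,k\}$, $D'=\{0\}\cup D$. For $v\in X$ let $X_v=\{v_i:i\in D\}$. An $(X,k)$-network is a directed network with nonnegative capacities $c$ on the vertex set $\bigcup_{v\in X}X_v\cup\{s,t\}$; an $s$-$t$ cut is a vertex set $S$ with $s\in S$, $t\notin S$, of capacity $c(S)$ = total capacity of edges leaving $S$. For $\phi:X\to D'$, $S_\phi=\{s\}\cup\{v_{\phi(v)}:v\in X,\phi(v)\ne0\}$. An $s$-$t$ cut is normalised if it contains at most one vertex of each $X_v$. For an $s$-$t$ cut $S$, $\nu(S)=\{s\}\cup\{v_i: v\in X, S\cap X_v=\{v_i\}\}$. The network represents $f$ if $c(S_\phi)=f(\phi)$ for every $\phi$, and is $k$-submodular if $c(S)\ge c(\nu(S))$ for every $s$-$t$ cut $S$. A minimum solution $x$ of $f$ is dominated by a minimum solution $y$ if $x\ne y$ and $x_i\ne0\Rightarrow x_i=y_i$ for all $i$; it is extreme if not dominated. A normalised minimum cut $S$ is dominated by a normalised minimum cut $S'$ if $S\subsetneq S'$; it is an extreme minimum cut if not dominated. *)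

From mathcomp Require Import all_boot all_order all_algebra.
Set Implicit Arguments. Unset Strict Implicit. Unset Printing Implicit Defensive.
Import Order.TTheory GRing.Theory Num.Theory.
Local Open Scope ring_scope.

(* Vertices of an (X,k)-network: inl true = s, inl false = t,
   inr (v, i) = v_{i+1} (i : 'I_k encodes the label i+1 of D = {1..k}). *)
Definition vert (X : finType) (k : nat) : finType := (bool + (X * 'I_k))%type.

Definition src {X : finType} {k : nat} : vert X k := inl true.
Definition snk {X : finType} {k : nat} : vert X k := inl false.
Definition node {X : finType} {k : nat} (v : X) (i : 'I_k) : vert X k := inr (v, i).

Definition Xv {X : finType} {k : nat} (v : X) : {set vert X k} :=
  [set x : vert X k | [exists i : 'I_k, x == node v i]].

(* D' = {0,..,k} is 'I_k.+1; label i+1 of D corresponds to lift ord0 i. *)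
Definition assignment (X : finType) (k : nat) := {ffun X -> 'I_k.+1}.

(* A network: nonnegative capacities on all ordered pairs of vertices
   (capacity 0 = no edge). *)
Definition nonneg_cap {R : realFieldType} {X : finType} {k : nat}
  (c : vert X k -> vert X k -> R) := forall u w, 0 <= c u w.

Definition is_st_cut {X : finType} {k : nat} (S : {set vert X k}) :=
  (src \in S) /\ (snk \notin S).

Definition cut_cap {R : realFieldType} {X : finType} {k : nat}
  (c : vert X k -> vert X k -> R) (S : {set vert X k}) : R :=
  \sum_(u in S) \sum_(w in ~: S) c u w.

Definition S_of {X : finType} {k : nat} (phi : assignment X k) : {set vert X k} :=
  src |: [set x : vert X k | [exists v : X, exists i : 'I_k,
          (x == node v i) && (phi v == lift ord0 i)]].

Definition normalised {X : finType} {k : nat} (S : {set vert X k}) :=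
  forall v : X, (#|S :&: Xv v| <= 1)%N.

Definition nu {X : finType} {k : nat} (S : {set vert X k}) : {set vert X k} :=
  src |: [set x : vert X k | [exists v : X, exists i : 'I_k,
          (x == node v i) && (S :&: Xv v == [set node v i])]].

Definition represents {R : realFieldType} {X : finType} {k : nat}
  (c : vert X k -> vert X k -> R) (f : assignment X k -> R) :=
  forall phi, cut_cap c (S_of phi) = f phi.

Definition k_submodular_net {R : realFieldType} {X : finType} {k : nat}
  (c : vert X k -> vert X k -> R) :=
  forall S, is_st_cut S -> cut_cap c (nu S) <= cut_cap c S.

Definition min_solution {R : realFieldType} {X : finType} {k : nat}
  (f : assignment X k -> R) (x : assignment X k) :=
  forall y, f x <= f y.

Definition dominated_by {X : finType} {k : nat} (x y : assignment X k) :=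
  x <> y /\ forall v, x v != ord0 -> x v = y v.

Definition extreme_min_solution {R : realFieldType} {X : finType} {k : nat}
  (f : assignment X k -> R) (x : assignment X k) :=
  min_solution f x /\ ~ exists y, min_solution f y /\ dominated_by x y.

Definition min_cut {R : realFieldType} {X : finType} {k : nat}
  (c : vert X k -> vert X k -> R) (S : {set vert X k}) :=
  is_st_cut S /\ forall S', is_st_cut S' -> cut_cap c S <= cut_cap c S'.

Definition normalised_min_cut {R : realFieldType} {X : finType} {k : nat}
  (c : vert X k -> vert X k -> R) (S : {set vert X k}) :=
  min_cut c S /\ normalised S.

Definition extreme_min_cut {R : realFieldType} {X : finType} {k : nat}
  (c : vert X k -> vert X k -> R) (S : {set vert X k}) :=
  normalised_min_cut c S /\
  ~ exists S', normalised_min_cut c S' /\ S \proper S'.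

From mathcomp Require Import all_boot all_order all_algebra.
Set Implicit Arguments. Unset Strict Implicit. Unset Printing Implicit Defensive.
Import Order.TTheory.
Local Open Scope ring_scope.

(* phi |-> S_phi is an order embedding of assignments, ordered by domination,
   into cuts ordered by inclusion, whose image is exactly the normalised cuts.
   Since nu maps every s-t cut to some S_psi without increasing its capacity,
   the minimum of f equals the minimum cut capacity; so minimum solutions
   correspond to normalised minimum cuts, and domination to strict inclusion,
   which transports extremality in both directions. *)

Section CutsOfAssignments.

Variables (X : finType) (k : nat).
Implicit Types (phi psi : assignment X k) (S : {set vert X k}).

Lemma in_S_of phi x :
  (x \in S_of phi) =
  match x with inl b => b | inr (v, i) => phi v == lift ord0 i end.
Proof.
rewrite /S_of !inE; case: x => [[]|[v i]] //=.
- by apply/existsP => -[v]; case/existsP.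
- apply/existsP/idP => [[w /existsP [j /andP [/eqP [-> ->]]]] //|phi_v].
  by exists v; apply/existsP; exists i; rewrite eqxx.
Qed.

Lemma in_nu S x :
  (x \in nu S) =
  match x with inl b => b | inr (v, i) => S :&: Xv v == [set node v i] end.
Proof.
rewrite /nu !inE; case: x => [[]|[v i]] //=.
- by apply/existsP => -[v]; case/existsP.
- apply/existsP/idP => [[w /existsP [j /andP [/eqP [-> ->]]]] //|Sv].
  by exists v; apply/existsP; exists i; rewrite eqxx.
Qed.

Lemma in_Xv (v : X) (x : vert X k) :
  (x \in Xv v) = match x with inl _ => false | inr (w, _) => w == v end.
Proof.
rewrite /Xv inE; case: x => [b|[w i]]; first by apply/existsP => -[j].
by apply/existsP/eqP => [[j /eqP [->]] //|->]; exists i.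
Qed.

Lemma S_of_st_cut phi : is_st_cut (S_of phi).
Proof. by split; rewrite in_S_of. Qed.

Lemma S_of_normalised phi : normalised (S_of phi).
Proof.
move=> v; apply/card_le1_eqP => x y.
rewrite !(in_setI, in_S_of, in_Xv).
case: x => [?|[w i]]; rewrite ?andbF // => /andP [/eqP phi_i /eqP w_v].
case: y => [?|[w' j]]; rewrite ?andbF // => /andP [/eqP phi_j /eqP w'_v].
by subst w w'; rewrite phi_i in phi_j; rewrite (lift_inj phi_j).
Qed.

Lemma nu_S_of S : exists psi, nu S = S_of psi.
Proof.
exists [ffun v => if [pick i | S :&: Xv v == [set node v i]] is Some i
                  then lift ord0 i else ord0].
apply/setP => -[b|[v i]]; rewrite in_nu in_S_of ?ffunE //.
case: pickP => [j /eqP Sv_j|Sv_none]; last by rewrite Sv_none (negbTE (neq_lift _ _)).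
rewrite Sv_j (inj_eq lift_inj); apply/eqP/eqP => [Sv_i|-> //].
by have /set1P [->] : node v j \in [set node v i] by rewrite -Sv_i set11.
Qed.

Lemma nu_normalised_cut S : is_st_cut S -> normalised S -> nu S = S.
Proof.
move=> [s_in t_out] S_norm; apply/setP => -[[]|[v i]]; rewrite in_nu //.
  exact/esym/negbTE.
rewrite eq_sym eqEcard sub1set cards1 S_norm andbT inE in_Xv /= eqxx.
by rewrite andbT.
Qed.

Lemma normalised_cutP S :
  is_st_cut S -> normalised S -> exists psi, S = S_of psi.
Proof.
move=> S_cut S_norm; have [psi nuS] := nu_S_of S.
by exists psi; rewrite -nuS nu_normalised_cut.
Qed.

Lemma S_of_subset phi psi :
  S_of phi \subset S_of psi <-> forall v, phi v != ord0 -> phi v = psi v.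
Proof.
split => [/subsetP sub v|agree].
  case: (unliftP ord0 (phi v)) => [j phi_v|->]; last by rewrite eqxx.
  by have := sub (node v j); rewrite !in_S_of /= phi_v eqxx => /(_ isT) /eqP.
apply/subsetP => -[b|[v i]]; rewrite !in_S_of // => /eqP phi_v.
by rewrite -agree phi_v // eq_sym neq_lift.
Qed.

Lemma S_of_inj : injective (@S_of X k).
Proof.
move=> phi psi eq_S; apply/ffunP => v.
have /S_of_subset sub_pp : S_of phi \subset S_of psi by rewrite eq_S.
have /S_of_subset sub_qp : S_of psi \subset S_of phi by rewrite eq_S.
have [phi0|/sub_pp //] := eqVneq (phi v) ord0.
have [psi0|/sub_qp //] := eqVneq (psi v) ord0.
by rewrite phi0 psi0.
Qed.

Lemma dominated_by_proper phi psi :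
  dominated_by phi psi <-> S_of phi \proper S_of psi.
Proof.
rewrite properEneq (inj_eq S_of_inj); split.
  by move=> [/eqP neq /S_of_subset sub]; rewrite neq.
by case/andP => /eqP neq /S_of_subset.
Qed.

End CutsOfAssignments.

Section RepresentingNetwork.

Variables (R : realFieldType) (X : finType) (k : nat).
Variables (f : assignment X k -> R) (c : vert X k -> vert X k -> R).
Hypotheses (c_ksub : k_submodular_net c) (c_rep : represents c f).

Lemma min_solution_min_cut phi : min_solution f phi <-> min_cut c (S_of phi).
Proof.
split => [phi_min | [_ S_phi_min] psi]; last first.
  by rewrite -!c_rep; apply/S_phi_min/S_of_st_cut.
split=> [|S S_cut]; first exact: S_of_st_cut.
have [psi nuS] := nu_S_of S.
by apply: le_trans (c_ksub S_cut); rewrite nuS !c_rep.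
Qed.

Lemma min_solution_normalised_min_cut phi :
  min_solution f phi <-> normalised_min_cut c (S_of phi).
Proof.
split=> [/min_solution_min_cut phi_min | [/min_solution_min_cut] //].
by split=> //; apply: S_of_normalised.
Qed.

End RepresentingNetwork.

Theorem lemma17 (R : realFieldType) (X : finType) (k : nat)
  (f : assignment X k -> R) (c : vert X k -> vert X k -> R) :
  nonneg_cap c -> k_submodular_net c -> represents c f ->
  forall phi : assignment X k,
    extreme_min_solution f phi <-> extreme_min_cut c (S_of phi).
Proof.
move=> _ c_ksub c_rep phi.
have minE := min_solution_normalised_min_cut c_ksub c_rep.
split=> -[phi_min not_dom]; split; try by apply/minE.
- move=> [T [T_min T_dom]]; have [[T_cut _] T_norm] := T_min.
  have [psi T_psi] := normalised_cutP T_cut T_norm; subst T.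
  by apply: not_dom; exists psi; split; [apply/minE | apply/dominated_by_proper].
- move=> [psi [psi_min phi_dom]]; apply: not_dom; exists (S_of psi).
  by split; [apply/minE | apply/dominated_by_proper].
Qed.
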